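(* Let $p$ be a prime, $m\ge 1$, $t\ge 1$ integers, $R^t=\mathbb{F}_{p^m}[u]/\langle u^t\rangle$, let $\omega(x)\in R^t[x]$ and $R^{t,\omega}=R^t[x]/\langle\omega(x)\rangle$. Then for every ideal $I$ of $R^{t,\omega}$ there exists $a\in I$ such that $$I=\langle a\rangle+u(I:u).$$
   Context: For an ideal $I$ of a commutative ring $R$ and $a\in R$, $(I:a)=\{x\in R: xa\in I\}$. *)

From mathcomp Require Import all_boot all_order all_algebra.
Set Implicit Arguments. Unset Strict Implicit. Unset Printing Implicit Defensive.
Import GRing.Theory.
Local Open Scope ring_scope.

Definition is_ideal (S : comPzRingType) (I : S -> Prop) : Prop :=
  [/\ I 0,
      (forall x y, I x -> I y -> I (x + y)) &
      (forall r x, I x -> I (r * x))].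

Definition colon (S : comPzRingType) (I : S -> Prop) (a : S) : S -> Prop :=
  fun x => I (x * a).

From mathcomp Require Import all_boot all_order all_algebra.
From Stdlib Require Import Classical.
From mathcomp Require Import ring.
Set Implicit Arguments.
Unset Strict Implicit.
Unset Printing Implicit Defensive.
Import GRing.Theory.
Local Open Scope ring_scope.

(* Every element of S = R^t[x]/<omega> can be written th f + u y with f in
   F[x], where th : F[x] -> S maps coefficients through F -> R^t.  Given an
   ideal I, the f occurring this way in elements of I form an ideal of the PID
   F[x]; lift a generator g of it to some a in I.  If z = th f + u y is in I
   then f = q g, so z - th q * a lies in I and is a multiple u y' of u, i.e.
   y' is in (I : u). *)

Lemma poly_ideal_principal (F : fieldType) (J : {poly F} -> Prop) :
  J 0 -> (forall f g q, J f -> J g -> J (f - q * g)) ->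
  exists2 g, J g & forall f, J f -> g %| f.
Proof.
move=> J0 J_sub.
have J_mod f g : J f -> J g -> J (f %% g).
  have -> : f %% g = f - f %/ g * g.
    by rewrite [X in X - _](divp_eq f g) addrAC subrr add0r.
  exact: J_sub.
apply: NNPP => no_gen.
have no_J_of_size n g : J g -> g != 0 -> size g != n.
  elim/ltn_ind: n g => n IH g Jg g_neq0; apply/eqP => size_g.
  apply: no_gen; exists g => // f Jf; apply/negPn/negP => g_ndvd_f.
  have r_small : (size (f %% g)%R < n)%N by rewrite -size_g ltn_modp.
  by move: (IH _ r_small _ (J_mod f g Jf Jg) g_ndvd_f); rewrite eqxx.
have [g0 Jg0 g0_neq0] : exists2 g0, J g0 & g0 != 0.
  apply: NNPP => J_trivial; apply: no_gen; exists 0 => // f Jf.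
  rewrite dvd0p; apply/eqP; apply: NNPP => f_neq0.
  by apply: J_trivial; exists f => //; apply/eqP.
by move: (no_J_of_size (size g0) g0 Jg0 g0_neq0); rewrite eqxx.
Qed.

Lemma rmorph_poly_decomp (F : nzRingType) (R : comNzRingType)
    (phi : {rmorphism {poly F} -> R}) :
  (forall c : R, exists q, phi q = c) ->
  forall c : R, exists c0 c1, c = phi c0%:P + phi 'X * c1.
Proof.
move=> phi_surj c; have [q <-] := phi_surj c.
exists q`_0, (phi (drop_poly 1 q)); rewrite -!rmorphM -rmorphD.
have take1 : take_poly 1 q = (q`_0)%:P.
  by apply/polyP => -[|i]; rewrite coef_take_poly coefC.
by rewrite -[in LHS](poly_take_drop 1 q) take1 commr_polyX.
Qed.

Lemma poly_rmorph_poly_decomp (F : nzRingType) (R : comNzRingType)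
    (phi : {rmorphism {poly F} -> R}) :
  (forall c : R, exists q, phi q = c) ->
  forall P : {poly R}, exists f P',
    P = map_poly (phi \o polyC) f + (phi 'X)%:P * P'.
Proof.
move=> phi_surj; elim/poly_ind => [|P c [f [P' def_P]]].
  by exists 0, 0; rewrite rmorph0 mulr0 addr0.
have [c0 [c1 def_c]] := rmorph_poly_decomp phi_surj c.
exists (f * 'X + c0%:P), (P' * 'X + c1%:P).
rewrite rmorphD rmorphM /= map_polyX map_polyC /= def_P def_c polyCD polyCM.
ring.
Qed.

Section IdealModuloU.

Variables (F : fieldType) (S : comPzRingType).
Variables (th : {rmorphism {poly F} -> S}) (u : S).
Hypothesis S_decomp : forall z : S, exists f y, z = th f + u * y.

Lemma ideal_principal_add_mul_colon (I : S -> Prop) : is_ideal I ->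
  exists a, I a /\
    forall z, I z <-> exists r y, colon I u y /\ z = r * a + u * y.
Proof.
case=> I0 ID IM.
have I_addMl x y r : I x -> I y -> I (x + r * y) by move=> Ix Iy; apply/ID/IM.
pose J f := exists y, I (th f + u * y).
have [g [y0 Ia] g_dvd] : exists2 g, J g & forall f, J f -> g %| f.
  apply: poly_ideal_principal => [|f g q [y1 If] [y2 Ig]].
    by exists 0; rewrite rmorph0 mulr0 addr0.
  exists (y1 - th q * y2).
  have -> : th (f - q * g) + u * (y1 - th q * y2) =
      (th f + u * y1) + (- th q) * (th g + u * y2).
    by rewrite rmorphB rmorphM; ring.
  exact: I_addMl.
exists (th g + u * y0); split=> // z; split=> [Iz | [r [y [Iyu ->]]]].
  have [f [y def_z]] := S_decomp z.
  have /dvdpP [q def_f] : g %| f by apply: g_dvd; exists y; rewrite -def_z.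
  exists (th q), (y - th q * y0); split; last first.
    by rewrite def_z def_f rmorphM; ring.
  rewrite /colon.
  have -> : (y - th q * y0) * u = z + (- th q) * (th g + u * y0).
    by rewrite def_z def_f rmorphM; ring.
  exact: I_addMl.
by apply: ID; [exact: IM | rewrite mulrC].
Qed.

End IdealModuloU.

Theorem corollary2p4 (p m t : nat) (F : finFieldType)
  (Rt : comNzRingType) (phi : {rmorphism {poly F} -> Rt})
  (omega : {poly Rt}) (S : comPzRingType) (psi : {rmorphism {poly Rt} -> S}) :
  prime p -> (1 <= m)%N -> (1 <= t)%N -> #|F| = (p ^ m)%N ->
  (forall y : Rt, exists q : {poly F}, phi q = y) ->
  (forall q : {poly F}, phi q = 0 <-> ('X^t %| q)) ->
  (forall z : S, exists P : {poly Rt}, psi P = z) ->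
  (forall P : {poly Rt}, psi P = 0 <-> exists Q : {poly Rt}, P = Q * omega) ->
  forall I : S -> Prop, is_ideal I ->
  exists a : S, I a /\
    (forall z : S, I z <->
       exists (r y : S), colon I (psi (phi 'X)%:P) y /\
                         z = r * a + psi (phi 'X)%:P * y).
Proof.
move=> _ _ _ _ phi_surj _ psi_surj _.
apply: (ideal_principal_add_mul_colon (th := psi \o map_poly (phi \o polyC))).
move=> z; have [P <-] := psi_surj z.
have [f [P' ->]] := poly_rmorph_poly_decomp phi_surj P.
by exists f, (psi P'); rewrite rmorphD rmorphM.
Qed.
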